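(* Let $q,r,\nu$ be positive integers with $\nu\le q$. Then the matrix $K(z)=I_\nu\otimes F(z)+S_\nu\otimes F'(z)\in\mathbb{C}^{\nu r\times\nu(r-1)}$ has rank $\nu(r-1)$ and satisfies $\mathcal{N}^0(z)K(z)=0$ for all $z$; in other words, the columns of $K(z)$ form a basis of the kernel of $\mathcal{N}^0(z)$. (For $r=1$, $K(z)$ is empty and by convention its columns span $\{0\}$.)
   Context: Matrix indices start at $0$. $u(z)=(1,z,\dots,z^{q-1})^\top$, $w(z)=(1,z,\dots,z^{r-1})$, $M(z)=u(z)w(z)\in\mathbb{C}^{q\times r}$ and $\mathcal{N}^0(z)=\big(M(z),\frac{1}{1!}M'(z),\dots,\frac{1}{(\nu-1)!}M^{(\nu-1)}(z)\big)\in\mathbb{C}^{q\times\nu r}$. $F(z)\in\mathbb{C}^{r\times(r-1)}$ has entries $F_{ii}=-z$, $F_{i+1,i}=1$, and $0$ otherwise; $F'(z)$ is its derivative in $z$. $S_\nu$ is the $\nu\times\nu$ shift matrix with $(S_\nu)_{ij}=\delta_{i+1,j}$. Thus $K(z)$ is block upper bidiagonal with blocks $F(z)$ on the diagonal and $F'(z)$ on the block superdiagonal. *)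

From HB Require Import structures.
From mathcomp Require Import all_boot all_order all_algebra.
From mathcomp Require Import mxtens complex.
From mathcomp Require Import Rstruct.
Set Implicit Arguments. Unset Strict Implicit. Unset Printing Implicit Defensive.
Import Order.TTheory GRing.Theory Num.Theory.
Local Open Scope ring_scope.

Notation CC := ((Rdefinitions.R)[i]) (only parsing).

Definition Fpoly (r : nat) : 'M[{poly CC}]_(r, r.-1) :=
  \matrix_(i < r, j < r.-1)
    (if (i == j :> nat) then - 'X
     else if (i == j.+1 :> nat) then 1 else 0).

Definition Fmx (r : nat) (z : CC) : 'M[CC]_(r, r.-1) :=
  map_mx (fun p => p.[z]) (Fpoly r).
Definition dFmx (r : nat) (z : CC) : 'M[CC]_(r, r.-1) :=
  map_mx (fun p => (p^`()).[z]) (Fpoly r).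

Definition shiftmx (nu : nat) : 'M[CC]_nu :=
  \matrix_(i < nu, j < nu) ((i.+1 == j :> nat)%:R).

(* K(z) = I_nu (x) F(z) + S_nu (x) F'(z)  (Kronecker products, standard
   row-major block indexing (a,b) |-> a * r + b, from mxtens). *)
Definition Kmx (nu r : nat) (z : CC) : 'M[CC]_(nu * r, nu * r.-1) :=
  (1%:M : 'M[CC]_nu) *t Fmx r z + shiftmx nu *t dFmx r z.

Definition Mpoly (q r : nat) : 'M[{poly CC}]_(q, r) :=
  \matrix_(i < q, j < r) 'X^(i + j).

(* N^0(z) = (M(z), M'(z)/1!, ..., M^(nu-1)(z)/(nu-1)!): column index
   k * r + j  (block k, column j) holds (1/k!) M^(k)(z)_{., j}.
   p^`N(k) is the k-th derivative of p divided by k!. *)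
Definition N0mx (q r nu : nat) (z : CC) : 'M[CC]_(q, nu * r) :=
  \matrix_(i < q, c < nu * r)
    (((Mpoly q r i (mxtens_unindex c).2)^`N((mxtens_unindex c).1)).[z]).

From HB Require Import structures.
From mathcomp Require Import all_boot all_order all_algebra.
From mathcomp Require Import mxtens complex Rstruct.
From mathcomp Require Import ring zify.
Import Order.TTheory GRing.Theory Num.Theory.
Local Open Scope ring_scope.

(* Write t(k, n) for the k-th Taylor coefficient of z^n, so that the column
   (k, j) of N^0(z) is (t(k, i + j))_i.  The column (c, d) of K(z) takes
   column (c, d+1) of N^0(z), minus z times column (c, d), minus column
   (c-1, d); these cancel by the Pascal-type recurrence
   t(k, n+1) = z t(k, n) + t(k-1, n).  Deleting the rows (a, 0) of K(z)
   leaves a square upper unitriangular matrix, so K(z) has full column rank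
   nu (r-1); the first nu rows of the columns (k, 0) of N^0(z) form a lower
   unitriangular block, so rank N^0(z) >= nu, and rank-nullity shows that the
   columns of K(z) span the whole kernel. *)

Section Deltas.
Context {R : pzRingType}.

Lemma sum_delta_nat {n} (h : nat -> R) {k} : (k < n)%N ->
  \sum_(b < n) (b == k :> nat)%:R * h b = h k.
Proof.
move=> lt_kn; rewrite (bigD1 (Ordinal lt_kn)) //= eqxx mul1r big1 ?addr0 //.
by move=> b; rewrite -val_eqE /= => /negbTE->; rewrite mul0r.
Qed.

Lemma sum_mxtens m n (G : 'I_(m * n) -> R) :
  \sum_(k < m * n) G k = \sum_(a < m) \sum_(b < n) G (mxtens_index (a, b)).
Proof.
rewrite pair_big (reindex (@mxtens_index m n)) /=; first by apply: eq_bigr => -[].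
by exists (@mxtens_unindex m n) => k _; rewrite (mxtens_indexK, mxtens_unindexK).
Qed.

Lemma sum_delta2_nat {m n} (h : nat -> nat -> R) {c d} :
  (c < m)%N -> (d < n)%N ->
  \sum_(a < m) \sum_(b < n) (a == c :> nat)%:R * (b == d :> nat)%:R * h a b = h c d.
Proof.
move=> lt_cm lt_dn; rewrite -(sum_delta_nat (fun a => h a d) lt_cm).
apply: eq_bigr => a _; rewrite -(sum_delta_nat (h a) lt_dn) mulr_sumr.
by apply: eq_bigr => b _; rewrite mulrA.
Qed.

End Deltas.

Section RankFacts.
Context {F : fieldType}.

Lemma mxrank_trig n (A : 'M[F]_n) :
  is_trig_mx A -> (forall i, A i i != 0) -> \rank A = n.
Proof.
move=> trigA diagA; apply/mxrank_unit; rewrite unitmxE det_trig // unitfE.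
by apply/prodf_neq0 => i _.
Qed.

Lemma mxrank_colsub m n p (f : 'I_p -> 'I_n) (A : 'M[F]_(m, n)) :
  (\rank (colsub f A) <= \rank A)%N.
Proof. by rewrite -[A in colsub _ A]mulmx1 -mulmx_colsub mxrankM_maxl. Qed.

Lemma trmx_eq_kermx m n p (A : 'M[F]_(m, n)) (B : 'M[F]_(n, p)) :
  A *m B = 0 -> (n <= \rank A + \rank B)%N -> (B^T == kermx A^T)%MS.
Proof.
move=> AB0 rank_ge.
have subB : (B^T <= kermx A^T)%MS by rewrite sub_kermx -trmx_mul AB0 trmx0.
have [_ <-] := mxrank_leqif_eq subB.
by rewrite eqn_leq mxrankS //= mxrank_ker !mxrank_tr leq_subLR.
Qed.

End RankFacts.

Section TaylorXn.
Context {R : comNzRingType} (z : R).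

Definition taylorXn k n := (('X^n : {poly R})^`N(k)).[z].

Lemma taylorX0n n : taylorXn 0 n = z ^+ n.
Proof. by rewrite /taylorXn nderivn0 hornerXn. Qed.

Lemma taylorXnS k n :
  taylorXn k n.+1 = z * taylorXn k n + (0 < k)%:R * taylorXn k.-1 n.
Proof.
case: k => [|k]; first by rewrite !taylorX0n exprS mul0r addr0.
rewrite /taylorXn exprSr -[_ * 'X]addr0 -[0 : {poly R}]/(0%:P) nderivnMXaddC.
by rewrite hornerD hornerMX mul1r addrC mulrC.
Qed.

Lemma taylorXnn k : taylorXn k k = 1.
Proof. by rewrite /taylorXn nderivnXn subnn binn expr0 hornerMn hornerC. Qed.

Lemma taylorXn_small k n : (n < k)%N -> taylorXn k n = 0.
Proof. by move=> lt_nk; rewrite /taylorXn nderivnXn bin_small // mulr0n horner0. Qed.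

End TaylorXn.

Lemma N0mxE q r nu z i a b :
  N0mx q r nu z i (mxtens_index (a, b)) = taylorXn z a (i + b).
Proof. by rewrite !mxE mxtens_indexK. Qed.

Lemma KmxE nu r z (a : 'I_nu) (b : 'I_r.+1) (c : 'I_nu) (d : 'I_r) :
  Kmx nu r.+1 z (mxtens_index (a, b)) (mxtens_index (c, d)) =
    (a == c :> nat)%:R * (b == d.+1 :> nat)%:R
  - z * ((a == c :> nat)%:R * (b == d :> nat)%:R)
  - (a.+1 == c :> nat)%:R * (b == d :> nat)%:R.
Proof.
rewrite mxE !tensmxE !mxE.
have [->|ne_bd] := eqVneq (b : nat) d.
  by rewrite (ltn_eqF (ltnSn d)) derivN derivX !hornerN hornerX hornerC /=; ring.
by case: (nat_of_ord b == d.+1); rewrite ?derivC ?hornerC ?horner0 ?deriv0 /=; ring.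
Qed.

Lemma mulmx_N0mx_Kmx q r nu z : N0mx q r.+1 nu z *m Kmx nu r.+1 z = 0.
Proof.
apply/matrixP => i j; rewrite -[j]mxtens_unindexK; case: (mxtens_unindex j) => c d.
rewrite !mxE sum_mxtens.
pose T a b := taylorXn z a (i + b).
transitivity (\sum_(a < nu) \sum_(b < r.+1)
  ((a == c :> nat)%:R * (b == d.+1 :> nat)%:R * T a b
   - (a == c :> nat)%:R * (b == d :> nat)%:R * (z * T a b)
   - (a == c.-1 :> nat)%:R * (b == d :> nat)%:R * ((0 < c)%:R * T a b))).
  apply: eq_bigr => a _; apply: eq_bigr => b _; rewrite N0mxE KmxE.
  have -> : (a.+1 == c :> nat) = (0 < c)%N && (a == c.-1 :> nat) by case: (nat_of_ord c).
  by rewrite -mulnb natrM /T; ring.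
under eq_bigr => a _ do rewrite !sumrB.
have lt_c1 : (c.-1 < nu)%N := leq_ltn_trans (leq_pred c) (ltn_ord c).
have lt_d1 : (d.+1 < r.+1)%N := ltn_ord d.
have lt_d : (d < r.+1)%N := ltnW lt_d1.
rewrite !sumrB (sum_delta2_nat T (ltn_ord c) lt_d1).
rewrite (sum_delta2_nat (fun a b => z * T a b) (ltn_ord c) lt_d).
rewrite (sum_delta2_nat (fun a b => (0 < c)%:R * T a b) lt_c1 lt_d).
by rewrite /T addnS taylorXnS; ring.
Qed.

Lemma mxrank_Kmx nu r z : \rank (Kmx nu r.+1 z) = (nu * r)%N.
Proof.
apply/eqP; rewrite eqn_leq rank_leq_col /=.
pose f (k : 'I_(nu * r)) := @mxtens_index nu r.+1
  ((mxtens_unindex k).1, lift ord0 (mxtens_unindex k).2).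
pose T := rowsub f (Kmx nu r.+1 z).
have TE a b c d : T (mxtens_index (a, b)) (mxtens_index (c, d))
    = Kmx nu r.+1 z (mxtens_index (a, lift ord0 b)) (mxtens_index (c, d)).
  by rewrite mxE /f mxtens_indexK.
have trigT : is_trig_mx T^T.
  apply/is_trig_mxP => k l; rewrite mxE -[k]mxtens_unindexK -[l]mxtens_unindexK.
  case: (mxtens_unindex k) (mxtens_unindex l) => c d [a b] /= lt_kl.
  rewrite TE KmxE !lift0 eqSS.
  have [ac|_] := eqVneq (a : nat) c.
    rewrite -ac ltn_add2l in lt_kl.
    rewrite -ac (gtn_eqF lt_kl) (gtn_eqF (leqW lt_kl)) (gtn_eqF (ltnSn a)) /=; ring.
  have [ac1|_] := eqVneq a.+1 c; last by rewrite /=; ring.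
  have [bd1|_] := eqVneq b.+1 d; last by rewrite /=; ring.
  by rewrite -ac1 -bd1 mulSn in lt_kl; lia.
have diagT k : T^T k k != 0.
  rewrite mxE -[k]mxtens_unindexK; case: (mxtens_unindex k) => a b.
  rewrite TE KmxE !lift0 eqSS !eqxx (gtn_eqF (ltnSn b)) (gtn_eqF (ltnSn a)) /=.
  by rewrite !(mulr0, mulr1, subr0) oner_neq0.
by rewrite -[X in (X <= _)%N](mxrank_trig _ _ trigT diagT) mxrank_tr mxrankS ?rowsub_sub.
Qed.

Lemma mxrank_N0mx_ge q r nu z : (nu <= q)%N -> (nu <= \rank (N0mx q r.+1 nu z))%N.
Proof.
move=> le_nu_q.
pose U := rowsub (widen_ord le_nu_q)
  (colsub (fun k => @mxtens_index nu r.+1 (k, ord0)) (N0mx q r.+1 nu z)).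
have UE i k : U i k = taylorXn z k i by rewrite mxE [LHS]mxE N0mxE addn0.
have trigU : is_trig_mx U by apply/is_trig_mxP => i k lt_ik; rewrite UE taylorXn_small.
have diagU k : U k k != 0 by rewrite UE taylorXnn oner_neq0.
rewrite -[X in (X <= _)%N](mxrank_trig _ _ trigU diagU).
by rewrite (leq_trans (mxrankS (rowsub_sub _ _))) ?mxrank_colsub.
Qed.

Theorem proposition4p1 (q r nu : nat) (hq : (0 < q)%N) (hr : (0 < r)%N)
  (hnu : (0 < nu)%N) (hnuq : (nu <= q)%N) (z : CC) :
  [/\ \rank (Kmx nu r z) = (nu * r.-1)%N,
      N0mx q r nu z *m Kmx nu r z = 0
    & ((Kmx nu r z)^T == kermx (N0mx q r nu z)^T)%MS].
Proof.
case: r hr => // r _; have N0K0 := mulmx_N0mx_Kmx q r nu z.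
split; [exact: mxrank_Kmx | exact: N0K0 | apply: trmx_eq_kermx N0K0 _].
by rewrite mxrank_Kmx [X in (X <= _)%N]mulnS leq_add2r mxrank_N0mx_ge.
Qed.
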